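(* Let $(X,\{R_i\}_{i=0}^d)$ be a symmetric association scheme with adjacency matrices $A_0=I,\dots,A_d$ and intersection numbers $p_{ij}^k$, and let $W=\sum_{i=0}^dw_iA_i$ with $w_0=1$ be a complex Hadamard matrix. Suppose there exists $i\in\{1,\dots,d-1\}$ such that $p_{i_1,j_1}^i>0$ for all $i_1,j_1\in\{1,\dots,d-1\}$, and moreover $p_{i,j}^d>0$ for all $j\in\{1,\dots,d-1\}$. Then \[ H_4(W)\setminus\{1\}=\left\{\frac{w_{i_1}w_{i_2}}{w_{j_1}w_{j_2}}\;\middle|\;i_1,i_2,j_1,j_2\in\{1,\dots,d\}\right\}\setminus\{1\}. \]
   Context: An association scheme $(X,\{R_i\}_{i=0}^d)$ is a partition of $X\times X$ into relations $R_0=\{(x,x)\}$, $R_1,\dots,R_d$ such that for $(x,y)\in R_k$ the number $p_{ij}^k=|\{z\in X:(x,z)\in R_i,(z,y)\in R_j\}|$ depends only on $i,j,k$; symmetric means each $R_i$ is symmetric. $A_i$ is the $(0,1)$-matrix of $R_i$. A complex Hadamard matrix is a square complex matrix $H$ of order $n=|X|$ with entries of absolute value $1$ and $HH^*=nI$. For $W$ indexed by $X$, \[ H_4(W)=\left\{\frac{W_{x_1,y_1}W_{x_2,y_2}}{W_{x_2,y_1}W_{x_1,y_2}}\;\middle|\;x_1,x_2,y_1,y_2\in X,\ |\{x_1,x_2,y_1,y_2\}|=4\right\}. \] *)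

From HB Require Import structures.
From mathcomp Require Import all_boot all_order all_algebra.
From mathcomp Require Import complex.
From mathcomp Require Import reals.
Set Implicit Arguments. Unset Strict Implicit. Unset Printing Implicit Defensive.
Import Order.TTheory GRing.Theory Num.Theory.
Local Open Scope ring_scope.

(* A scheme on the finite set X with classes 0..d is encoded by the relation
   function r : X -> X -> 'I_(d.+1), with (x,y) \in R_i <-> r x y = i. *)

Definition pcount (X : finType) (d : nat) (r : X -> X -> 'I_d.+1)
  (i j : 'I_d.+1) (x y : X) : nat :=
  #|[set z | (r x z == i) && (r z y == j)]|.

Definition sym_assoc_scheme (X : finType) (d : nat) (r : X -> X -> 'I_d.+1) : Prop :=
  [/\ (forall x y, (r x y == ord0) = (x == y)),
      (forall i : 'I_d.+1, exists x y, r x y = i),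
      (forall x y, r x y = r y x) &
      (forall (i j : 'I_d.+1) x y x' y', r x y = r x' y' ->
          pcount r i j x y = pcount r i j x' y')].

(* intersection number p_ij^k (evaluated at some pair in R_k; 0 if R_k empty) *)
Definition inter_num (X : finType) (d : nat) (r : X -> X -> 'I_d.+1)
  (i j k : 'I_d.+1) : nat :=
  if [pick xy : X * X | r xy.1 xy.2 == k] is Some xy
  then pcount r i j xy.1 xy.2 else 0%N.

Definition adjA (X : finType) (d : nat) (r : X -> X -> 'I_d.+1) (C : nzRingType)
  (i : 'I_d.+1) (x y : X) : C := (r x y == i)%:R.

Definition schemeW (X : finType) (d : nat) (r : X -> X -> 'I_d.+1)
  (C : nzRingType) (w : 'I_d.+1 -> C) (x y : X) : C :=
  \sum_(i < d.+1) w i * adjA r C i x y.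

Definition complex_hadamard (X : finType) (R : rcfType) (W : X -> X -> R[i]) : Prop :=
  (forall x y, `|W x y| = 1) /\
  (forall x y, \sum_(z : X) W x z * (W y z)^* = (x == y)%:R * #|X|%:R).

Definition H4 (X : finType) (C : fieldType) (W : X -> X -> C) (c : C) : Prop :=
  exists x1 x2 y1 y2 : X,
    [/\ uniq [:: x1; x2; y1; y2] &
        c = W x1 y1 * W x2 y2 / (W x2 y1 * W x1 y2)].

From HB Require Import structures.
From mathcomp Require Import all_boot all_order all_algebra.
From mathcomp Require Import complex.
From mathcomp Require Import reals.
From mathcomp Require Import ring.
Set Implicit Arguments. Unset Strict Implicit.
Import Order.TTheory GRing.Theory Num.Theory.
Local Open Scope ring_scope.

(* The entries of W are the weights w_k, so a quadruple (x1,x2,y1,y2) yields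
   the ratio w_{r x1 y1} w_{r x2 y2} / (w_{r x2 y1} w_{r x1 y2}) with nonzero
   indices, which gives one inclusion. Conversely, fix x1, x2 in the class
   R_i: whenever one of a, e is below d, the intersection-number hypotheses
   give y1 with r x1 y1 = a, r y1 x2 = e, and similarly y2 for (b, f); the
   ratio being different from 1 forces y1 <> y2. Any four indices can be
   paired this way unless three of them equal d, and then the identity
   w_k w_d / (w_d w_d) = w_k w_i / (w_d w_i) gives the pairs (k, d), (i, i). *)

Lemma schemeW_rel (X : finType) (d : nat) (r : X -> X -> 'I_d.+1)
    (C : nzRingType) (w : 'I_d.+1 -> C) (x y : X) :
  schemeW r w x y = w (r x y).
Proof.
rewrite /schemeW (bigD1 (r x y)) //= /adjA eqxx mulr1 big1 ?addr0 // => k hk.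
by rewrite eq_sym (negbTE hk) mulr0.
Qed.

Lemma inter_num_gt0P (X : finType) (d : nat) (r : X -> X -> 'I_d.+1)
    (i j k : 'I_d.+1) :
  (0 < inter_num r i j k)%N ->
  exists x y z, [/\ r x y = k, r x z = i & r z y = j].
Proof.
rewrite /inter_num; case: pickP => [[x y] /= /eqP hk|] //.
rewrite /pcount card_gt0 => /set0Pn [z]; rewrite inE => /andP [/eqP h1 /eqP h2].
by exists x, y, z.
Qed.

Definition splits (X : finType) (d : nat) (r : X -> X -> 'I_d.+1)
    (a b k : 'I_d.+1) : Prop :=
  forall x y, r x y = k -> exists z, r x z = a /\ r z y = b.

Section SymmetricScheme.

Variables (X : finType) (d : nat) (r : X -> X -> 'I_d.+1).
Hypothesis S : sym_assoc_scheme r.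

Lemma rel_sym (x y : X) : r x y = r y x.
Proof. by case: S. Qed.

Lemma rel_gt0 (x y : X) : (0 < r x y)%N = (x != y).
Proof.
case: S => h0 _ _ _; rewrite -h0 lt0n.
by apply/idP/idP; apply: contra => /eqP; [move=> -> | move=> e; apply/eqP/val_inj].
Qed.

Lemma triangle_splits (x y z : X) : splits r (r x z) (r z y) (r x y).
Proof.
move=> x' y' e; case: S => _ _ _ hp.
have : (0 < pcount r (r x z) (r z y) x' y')%N.
  rewrite (hp _ _ x' y' x y e) /pcount card_gt0; apply/set0Pn; exists z.
  by rewrite inE !eqxx.
rewrite /pcount card_gt0 => /set0Pn [z']; rewrite inE => /andP [/eqP h1 /eqP h2].
by exists z'.
Qed.

Lemma splitsC (a b k : 'I_d.+1) : splits r a b k -> splits r b a k.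
Proof.
move=> sp x y hxy; have [z [h1 h2]] := sp y x (etrans (rel_sym y x) hxy).
by exists z; rewrite rel_sym h2 rel_sym h1.
Qed.

Lemma inter_num_splits (a b k : 'I_d.+1) :
  (0 < inter_num r a b k)%N -> splits r a b k.
Proof. by case/inter_num_gt0P=> x [y [z [<- <- <-]]]; apply: triangle_splits. Qed.

(* Read off the triangle (z, x, y) instead of (x, y, z). *)
Lemma inter_num_splits_rot (a b k : 'I_d.+1) :
  (0 < inter_num r a b k)%N -> splits r b k a.
Proof.
case/inter_num_gt0P=> x [y [z [hk ha hb]]].
by rewrite -ha -hb -hk (rel_sym x y) (rel_sym x z); apply: triangle_splits.
Qed.

Lemma H4_of_splits (R : rcfType) (w : 'I_d.+1 -> R[i]) (i a e b f : 'I_d.+1) :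
  (forall k, w k != 0) -> (0 < i)%N ->
  (0 < a)%N -> (0 < e)%N -> (0 < b)%N -> (0 < f)%N ->
  splits r a e i -> splits r b f i ->
  w a * w b / (w e * w f) != 1 ->
  H4 (schemeW r w) (w a * w b / (w e * w f)).
Proof.
move=> wnz i0 a0 e0 b0 f0 sp_ae sp_bf c1.
have [x1 [x2 h12]] : exists x1 x2, r x1 x2 = i by case: S => _ hex _ _.
have [y1 [e1 e2]] := sp_ae _ _ h12.
have [y2 [e3 e4]] := sp_bf x2 x1 (etrans (rel_sym _ _) h12).
exists x1, x2, y1, y2; split; last by rewrite !schemeW_rel e1 e3 rel_sym e2 rel_sym e4.
have ne_y : y1 != y2.
  apply: contra_neq c1 => E; subst y2.
  have -> : f = a by rewrite -e1 -e4 rel_sym.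
  have -> : b = e by rewrite -e3 -e2 rel_sym.
  by rewrite [w a * _]mulrC divff // mulf_neq0.
rewrite /= !inE !negb_or ne_y -!rel_gt0 (rel_sym x1 y2) (rel_sym x2 y1).
by rewrite h12 e1 e2 e3 e4 i0 a0 e0 b0 f0.
Qed.

End SymmetricScheme.

Lemma ord_max_geq (d : nat) (k : 'I_d.+1) : (d <= k)%N -> k = ord_max.
Proof. by move=> hk; apply/val_inj/eqP; rewrite eqn_leq hk -ltnS ltn_ord. Qed.

Definition nontop_pair (d : nat) (a e : 'I_d.+1) : bool :=
  [&& 0 < a, 0 < e & (a < d) || (e < d)]%N.

Lemma nontop_pair_splits (X : finType) (d : nat) (r : X -> X -> 'I_d.+1)
    (i : 'I_d.+1) :
  sym_assoc_scheme r ->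
  (forall i1 j1 : 'I_d.+1, (0 < i1)%N -> (i1 < d)%N ->
      (0 < j1)%N -> (j1 < d)%N -> (0 < inter_num r i1 j1 i)%N) ->
  (forall j : 'I_d.+1, (0 < j)%N -> (j < d)%N -> (0 < inter_num r i j ord_max)%N) ->
  forall a e : 'I_d.+1, nontop_pair a e -> splits r a e i.
Proof.
move=> S Hi Hd a e /and3P [a0 e0].
case: (ltnP a d) => ha; case: (ltnP e d) => he //= _.
- exact/inter_num_splits/Hi.
- by rewrite (ord_max_geq he); apply/(inter_num_splits_rot S)/Hd.
- by rewrite (ord_max_geq ha); apply/(splitsC S)/(inter_num_splits_rot S)/Hd.
Qed.

Lemma ratio_nontop_pairing (C : fieldType) (d : nat) (w : 'I_d.+1 -> C)
    (i i1 i2 j1 j2 : 'I_d.+1) :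
  (forall k, w k != 0) -> (0 < i < d)%N ->
  (0 < i1)%N -> (0 < i2)%N -> (0 < j1)%N -> (0 < j2)%N ->
  w i1 * w i2 / (w j1 * w j2) != 1 ->
  exists a e b f : 'I_d.+1,
    [/\ nontop_pair a e, nontop_pair b f &
        w i1 * w i2 / (w j1 * w j2) = w a * w b / (w e * w f)].
Proof.
move=> wnz /andP [i0 id] p1 p2 p3 p4 c1.
have md : (0 < @ord_max d)%N by apply: leq_ltn_trans id.
have ii : nontop_pair i i by rewrite /nontop_pair i0 id.
rewrite /nontop_pair; move: c1.
case: (ltnP i1 d) => h1; case: (ltnP i2 d) => h2;
  case: (ltnP j1 d) => h3; case: (ltnP j2 d) => h4;
  try by [exists i1, j1, i2, j2; rewrite p1 p2 p3 p4 ?h1 ?h2 ?h3 ?h4 ?orbT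
         |exists i1, j2, i2, j1; rewrite p1 p2 p3 p4 ?h1 ?h2 ?h3 ?h4 ?orbT;
          split=> //; rewrite [w j2 * _]mulrC];
  rewrite ?(ord_max_geq h1) ?(ord_max_geq h2) ?(ord_max_geq h3)
          ?(ord_max_geq h4) => c1.
- exists i1, ord_max, i, i; rewrite p1 h1 md; split=> //; field; by rewrite !wnz.
- exists i2, ord_max, i, i; rewrite p2 h2 md; split=> //; field; by rewrite !wnz.
- exists ord_max, j1, i, i; rewrite p3 h3 md orbT; split=> //; field; by rewrite !wnz.
- exists ord_max, j2, i, i; rewrite p4 h4 md orbT; split=> //; field; by rewrite !wnz.
- by move: c1; rewrite divff ?eqxx // mulf_neq0 ?wnz.
Qed.

Lemma hadamard_weight_neq0 (R : rcfType) (X : finType) (d : nat)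
    (r : X -> X -> 'I_d.+1) (w : 'I_d.+1 -> R[i]) :
  sym_assoc_scheme r -> complex_hadamard (schemeW r w) -> forall k, w k != 0.
Proof.
case=> _ hex _ _ [unimod _] k; have [x [y <-]] := hex k.
by rewrite -schemeW_rel -normr_eq0 unimod oner_eq0.
Qed.

Theorem lemma5p3 (R : realType) (X : finType) (d : nat)
  (r : X -> X -> 'I_d.+1) (w : 'I_d.+1 -> R[i]) :
  sym_assoc_scheme r ->
  w ord0 = 1 ->
  complex_hadamard (schemeW r w) ->
  (exists i : 'I_d.+1,
     [/\ (0 < i)%N, (i < d)%N,
         (forall i1 j1 : 'I_d.+1, (0 < i1)%N -> (i1 < d)%N ->
             (0 < j1)%N -> (j1 < d)%N -> (0 < inter_num r i1 j1 i)%N) &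
         (forall j : 'I_d.+1, (0 < j)%N -> (j < d)%N ->
             (0 < inter_num r i j ord_max)%N)]) ->
  forall c : R[i], c != 1 ->
    (H4 (schemeW r w) c <->
     exists i1 i2 j1 j2 : 'I_d.+1,
       [/\ (0 < i1)%N, (0 < i2)%N, (0 < j1)%N, (0 < j2)%N &
           c = w i1 * w i2 / (w j1 * w j2)]).
Proof.
move=> S _ hadW [i [i0 id Hi Hd]] c c1; split.
  case=> [x1 [x2 [y1 [y2 [uniq_x ->]]]]].
  exists (r x1 y1), (r x2 y2), (r x2 y1), (r x1 y2); rewrite !schemeW_rel !rel_gt0 //.
  move: uniq_x; rewrite /= !inE !negb_or.
  by case/and4P=> /and3P [_ -> ->] /andP [-> ->].
case=> i1 [i2 [j1 [j2 [p1 p2 p3 p4 E]]]]; rewrite {}E in c1 *.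
have wnz := hadamard_weight_neq0 S hadW.
have i0d : (0 < i < d)%N by rewrite i0 id.
have [a [e [b [f [ae bf E]]]]] := ratio_nontop_pairing wnz i0d p1 p2 p3 p4 c1.
rewrite {}E in c1 *.
have split_i := nontop_pair_splits S Hi Hd.
move: (ae) (bf) => /and3P [a0 e0 _] /and3P [b0 f0 _].
exact: (H4_of_splits S wnz i0 a0 e0 b0 f0 (split_i _ _ ae) (split_i _ _ bf) c1).
Qed.
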